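(* In the full-duplex filter-and-forward relay setting described in the context, the maximum achievable rate $$C=\max_{P(f)\ge 0,\ \Theta(f)}\ \frac{1}{2W}\int_{\Omega}\log_2\left(1+\frac{\left|H_{\rm SD}(f)+\frac{H_{\rm RD}(f)H_{\rm SR}(f)\Theta(f)}{1-\hat\alpha(f)\Theta(f)}\right|^2P(f)}{\left(\left|\frac{H_{\rm RD}(f)\Theta(f)}{1-\hat\alpha(f)\Theta(f)}\right|^2+1\right)N_0}\right)\mathrm{d}f$$ subject to $\int_\Omega P(f)\,\mathrm{d}f\le\bar P$ and $\int_\Omega\left|\frac{\Theta(f)}{1-\hat\alpha(f)\Theta(f)}\right|^2\left(|H_{\rm SR}(f)|^2P(f)+N_0\right)\mathrm{d}f\le\bar Q$ does not depend on the loop-back channel coefficient $\alpha$ nor on the loop-back delay $\tau$; specifically, it equals the optimal value of $$\max_{P(f)\ge0,\ \bar\Xi(f)\ge0}\ \frac{1}{2W}\int_\Omega\log_2\left(1+\frac{\left(|H_{\rm SD}(f)|+|H_{\rm RD}(f)H_{\rm SR}(f)|\bar\Xi(f)\right)^2P(f)}{\left(|H_{\rm RD}(f)|^2\bar\Xi(f)^2+1\right)N_0}\right)\mathrm{d}f$$ subject to $\int_\Omega P(f)\,\mathrm{d}f\le\bar P$ and $\int_\Omega \bar\Xi(f)^2\left(|H_{\rm SR}(f)|^2P(f)+N_0\right)\mathrm{d}f\le\bar Q$.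
   Context: $\Omega=[f_c-W/2,f_c+W/2]$ is the system band with bandwidth $W>0$. $H_{\rm SD}(f),H_{\rm SR}(f),H_{\rm RD}(f)$ are the (time-invariant, known) frequency responses of the source–destination, source–relay and relay–destination channels; $P(f)$ is the source transmit power spectral density; $\Theta(f)$ is the frequency response of the relay's analog filter (arbitrarily designable); the relay's received signal is $r(t)=h_{\rm SR}(t)\otimes s(t)+\alpha x(t-\tau)+n_{\rm R}(t)$ and its transmitted signal is $x(t)=\theta(t)\otimes r(t)$, with loop-back coefficient $\alpha<1$ and delay $\tau>0$; $\hat\alpha(f)=\alpha\exp(-j2\pi\tau f)$. Noises at relay and destination have constant power spectral density $N_0>0$; $\bar P,\bar Q$ are the source and relay power budgets. *)

From HB Require Import structures.
From mathcomp Require Import all_boot all_algebra.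
From mathcomp Require Import all_classical all_reals all_analysis.
From mathcomp Require Import complex.
Set Implicit Arguments. Unset Strict Implicit. Unset Printing Implicit Defensive.
Import GRing.Theory Num.Theory.
Local Open Scope classical_set_scope.
Local Open Scope ring_scope.

Section FFRelay.
Variable R : realType.

Definition cre (z : R[i]) : R := complex.Re z.
Definition cim (z : R[i]) : R := complex.Im z.
Definition sqmod (z : R[i]) : R := cre z ^+ 2 + cim z ^+ 2.

Definition cmeasurable (D : set R) (g : R -> R[i]) : Prop :=
  measurable_fun D (cre \o g) /\ measurable_fun D (cim \o g).

Definition log2 (x : R) : R := ln x / ln 2.

Definition Omega (fc W : R) : set R := `[fc - W / 2, fc + W / 2]%classic.

(* loop-back frequency response alpha * exp(-j 2 pi tau f) *)
Definition ahat (alpha tau f : R) : R[i] :=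
  Complex (alpha * cos (- (2 * pi * tau * f))) (alpha * sin (- (2 * pi * tau * f))).

Definition effTheta (alpha tau : R) (Theta : R -> R[i]) (f : R) : R[i] :=
  Theta f / (1 - ahat alpha tau f * Theta f).

Definition loop_ok (alpha tau : R) (Theta : R -> R[i]) (f : R) : Prop :=
  1 - ahat alpha tau f * Theta f != 0.

Local Open Scope ereal_scope.

Definition integ (D : set R) (g : R -> R) : \bar R :=
  \int[@lebesgue_measure R]_(x in D) (g x)%:E.

Definition rate_orig (fc W N0 : R) (Hsd Hsr Hrd : R -> R[i]) (alpha tau : R)
    (P : R -> R) (Theta : R -> R[i]) : \bar R :=
  (1 / (2 * W))%:E *
  integ (Omega fc W) (fun f =>
    log2 (1 + sqmod (Hsd f + Hrd f * Hsr f * effTheta alpha tau Theta f) * P f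
              / ((sqmod (Hrd f * effTheta alpha tau Theta f) + 1) * N0))%R).

Definition feasible_orig (fc W N0 Pbar Qbar : R) (Hsr : R -> R[i]) (alpha tau : R)
    (P : R -> R) (Theta : R -> R[i]) : Prop :=
  [/\ measurable_fun (Omega fc W) P,
      cmeasurable (Omega fc W) Theta,
      (forall f, Omega fc W f -> (0 <= P f)%R /\ loop_ok alpha tau Theta f),
      integ (Omega fc W) P <= Pbar%:E &
      integ (Omega fc W) (fun f => sqmod (effTheta alpha tau Theta f)
                                  * (sqmod (Hsr f) * P f + N0))%R <= Qbar%:E].

Definition C_orig (fc W N0 Pbar Qbar : R) (Hsd Hsr Hrd : R -> R[i]) (alpha tau : R)
    : \bar R :=
  ereal_sup [set rate_orig fc W N0 Hsd Hsr Hrd alpha tau PT.1 PT.2 |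
             PT in [set PT : (R -> R) * (R -> R[i]) |
                    feasible_orig fc W N0 Pbar Qbar Hsr alpha tau PT.1 PT.2]].

Definition rate_new (fc W N0 : R) (Hsd Hsr Hrd : R -> R[i])
    (P Xb : R -> R) : \bar R :=
  (1 / (2 * W))%:E *
  integ (Omega fc W) (fun f =>
    log2 (1 + (Num.sqrt (sqmod (Hsd f)) + Num.sqrt (sqmod (Hrd f * Hsr f)) * Xb f) ^+ 2 * P f
              / ((sqmod (Hrd f) * Xb f ^+ 2 + 1) * N0))%R).

Definition feasible_new (fc W N0 Pbar Qbar : R) (Hsr : R -> R[i])
    (P Xb : R -> R) : Prop :=
  [/\ measurable_fun (Omega fc W) P,
      measurable_fun (Omega fc W) Xb,
      (forall f, Omega fc W f -> (0 <= P f)%R /\ (0 <= Xb f)%R),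
      integ (Omega fc W) P <= Pbar%:E &
      integ (Omega fc W) (fun f => Xb f ^+ 2 * (sqmod (Hsr f) * P f + N0))%R <= Qbar%:E].

Definition C_new (fc W N0 Pbar Qbar : R) (Hsd Hsr Hrd : R -> R[i]) : \bar R :=
  ereal_sup [set rate_new fc W N0 Hsd Hsr Hrd PX.1 PX.2 |
             PX in [set PX : (R -> R) * (R -> R) |
                    feasible_new fc W N0 Pbar Qbar Hsr PX.1 PX.2]].

End FFRelay.

(* Only the effective relay response Xi = Theta / (1 - ahat Theta) enters the rate and the
   relay power, and Theta = Xi / (1 + ahat Xi) recovers Theta from every Xi with
   1 + ahat Xi <> 0: the loop-back channel merely forbids the responses with 1 + ahat Xi = 0.
   For a given |Xi| the triangle inequality |H_SD + H_RD H_SR Xi| <= |H_SD| + |H_RD H_SR| |Xi|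
   bounds the rate by the reformulated one, with equality when H_RD H_SR Xi is rotated onto the
   direction of H_SD.  Conversely, this aligned response of modulus Xi_bar is realisable except
   where 1 + ahat Xi vanishes; shrinking it there by 1 - 1/(n+1) keeps both budgets, and Fatou's
   lemma recovers the rate of Xi_bar as n grows. *)

From mathcomp Require Import all_boot all_algebra.
From mathcomp Require Import all_classical all_reals all_analysis.
From mathcomp Require Import measurable_realfun.
From mathcomp Require Import complex.
From mathcomp Require Import ring.
Set Implicit Arguments. Unset Strict Implicit. Unset Printing Implicit Defensive.
Import GRing.Theory Num.Theory order.Order.TTheory numFieldNormedType.Exports Normc.
Local Open Scope classical_set_scope.
Local Open Scope complex_scope.
Local Open Scope ring_scope.

Section Modulus.
Variable R : realType.
Implicit Types (z a k : R[i]) (x : R).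

Lemma sqmod_normc z : sqmod z = normc z ^+ 2.
Proof. by case: z => a b; rewrite /sqmod /cre /cim /= sqr_sqrtr // addr_ge0 ?sqr_ge0. Qed.

Lemma sqmod_ge0 z : 0 <= sqmod z.
Proof. by rewrite sqmod_normc sqr_ge0. Qed.

Lemma sqrt_sqmod z : Num.sqrt (sqmod z) = normc z.
Proof. by case: z. Qed.

Lemma normc_ge0 z : 0 <= normc z.
Proof. by case: z => a b; exact: sqrtr_ge0. Qed.

Lemma normc_real x : normc x%:C = `|x|.
Proof. by rewrite /= expr0n addr0 sqrtr_sqr. Qed.

Lemma normc_eq0 z : (normc z == 0) = (z == 0).
Proof. by apply/eqP/eqP => [/eq0_normc|->]; rewrite ?normc0. Qed.

Definition phase z : R[i] := if z == 0 then 1 else z * ((normc z)^-1)%:C.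

Lemma normc_phase z : normc (phase z) = 1.
Proof.
rewrite /phase; case: eqP => [_|/eqP z0]; first exact: normc1.
by rewrite normcM normc_real ger0_norm ?invr_ge0 ?normc_ge0 // mulfV ?normc_eq0.
Qed.

Lemma phase_neq0 z : phase z != 0.
Proof. by rewrite -normc_eq0 normc_phase oner_neq0. Qed.

Lemma phase_normc z : phase z * (normc z)%:C = z.
Proof.
rewrite /phase; case: eqP => [->|/eqP z0]; first by rewrite normc0 mulr0.
by rewrite -mulrA -rmorphM mulVf ?normc_eq0 // rmorph1 mulr1.
Qed.

Lemma normc_add_aligned a k x : 0 <= x ->
  normc (a + k * (phase a / phase k * x%:C)) = normc a + normc k * x.
Proof.
move=> x0.
have -> : a + k * (phase a / phase k * x%:C) = phase a * (normc a + normc k * x)%:C.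
  rewrite -{1}(phase_normc a) -{1}(phase_normc k) rmorphD rmorphM.
  by field; exact: phase_neq0.
by rewrite normcM normc_phase mul1r normc_real ger0_norm // addr_ge0 ?mulr_ge0 ?normc_ge0.
Qed.

Lemma normc_phase_div a k x : normc (phase a / phase k * x%:C) = `|x|.
Proof. by rewrite !normcM normcV !normc_phase invr1 !mul1r normc_real. Qed.

Lemma loop_inverse a k : 1 + a * k != 0 -> 1 - a * (k / (1 + a * k)) = (1 + a * k)^-1.
Proof. by move=> ak; field. Qed.

End Modulus.

Section Measurability.
Variables (R : realType) (D : set R).
Implicit Types (g h : R -> R[i]) (r : R -> R).

Lemma measurable_inv : measurable_fun [set: R] (@GRing.inv R).
Proof.
rewrite -(setvU [set 0]); apply/measurable_funU => //; first exact: measurableC.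
split.
- apply: open_continuous_measurable_fun.
    by apply: closed_openC; apply: compact_closed; [exact: Rhausdorff | exact: compact_set1].
  by move=> x; rewrite inE => /eqP x0; exact: inv_continuous.
- have : measurable_fun [set (0 : R)] (cst (0 : R)) by exact: measurable_cst.
  by apply: eq_measurable_fun => x; rewrite inE /= => ->; rewrite invr0.
Qed.

Lemma measurable_funV r : measurable_fun D r -> measurable_fun D (fun x => (r x)^-1).
Proof. exact: measurableT_comp measurable_inv. Qed.

Lemma measurable_fun_sqrt r : measurable_fun D r -> measurable_fun D (fun x => Num.sqrt (r x)).
Proof. exact: measurableT_comp (continuous_measurable_fun (@sqrt_continuous R)). Qed.

Lemma measurable_fun_log2 r : measurable_fun D r -> measurable_fun D (fun x => log2 (r x)).
Proof.
move=> mr; apply: measurable_funM; last exact: measurable_cst.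
exact: measurableT_comp (@measurable_ln R) mr.
Qed.

Lemma cmeasurable_cst (c : R[i]) : cmeasurable D (fun=> c).
Proof. by split; exact: measurable_cst. Qed.

Lemma cmeasurable_real r : measurable_fun D r -> cmeasurable D (fun x => (r x)%:C).
Proof. by move=> mr; split => //; exact: measurable_cst. Qed.

Lemma cmeasurableD g h : cmeasurable D g -> cmeasurable D h ->
  cmeasurable D (fun x => g x + h x).
Proof.
move=> [g1 g2] [h1 h2]; split.
- rewrite (_ : _ \o _ = fun x => cre (g x) + cre (h x)); first exact: measurable_funD.
  by apply/funext => x /=; case: (g x); case: (h x).
- rewrite (_ : _ \o _ = fun x => cim (g x) + cim (h x)); first exact: measurable_funD.
  by apply/funext => x /=; case: (g x); case: (h x).
Qed.

Lemma cmeasurableN g : cmeasurable D g -> cmeasurable D (fun x => - g x).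
Proof.
move=> [g1 g2]; split.
- rewrite (_ : _ \o _ = fun x => - cre (g x)); first exact: measurable_funN.
  by apply/funext => x /=; case: (g x).
- rewrite (_ : _ \o _ = fun x => - cim (g x)); first exact: measurable_funN.
  by apply/funext => x /=; case: (g x).
Qed.

Lemma cmeasurableM g h : cmeasurable D g -> cmeasurable D h ->
  cmeasurable D (fun x => g x * h x).
Proof.
move=> [g1 g2] [h1 h2]; split.
- rewrite (_ : _ \o _ = fun x => cre (g x) * cre (h x) - cim (g x) * cim (h x)).
    by apply: measurable_funB; exact: measurable_funM.
  by apply/funext => x /=; case: (g x); case: (h x).
- rewrite (_ : _ \o _ = fun x => cre (g x) * cim (h x) + cim (g x) * cre (h x)).
    by apply: measurable_funD; exact: measurable_funM.
  by apply/funext => x /=; case: (g x); case: (h x).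
Qed.

Lemma measurable_fun_sqmod g : cmeasurable D g -> measurable_fun D (fun x => sqmod (g x)).
Proof. by move=> [g1 g2]; apply: measurable_funD; exact: measurable_funX. Qed.

Lemma measurable_fun_normc g : cmeasurable D g -> measurable_fun D (fun x => normc (g x)).
Proof.
move=> mg; under eq_fun do rewrite -sqrt_sqmod.
exact: measurable_fun_sqrt (measurable_fun_sqmod mg).
Qed.

Lemma cmeasurableV g : cmeasurable D g -> cmeasurable D (fun x => (g x)^-1).
Proof.
move=> mg; have [g1 g2] := mg; have mV := measurable_funV (measurable_fun_sqmod mg).
split.
- rewrite (_ : _ \o _ = fun x => cre (g x) * (sqmod (g x))^-1); first exact: measurable_funM.
  by apply/funext => x /=; case: (g x).
- rewrite (_ : _ \o _ = fun x => - (cim (g x) * (sqmod (g x))^-1)).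
    by apply: measurable_funN; exact: measurable_funM.
  by apply/funext => x /=; case: (g x).
Qed.

Lemma measurable_fun_eq0 g : cmeasurable D g -> measurable_fun D (fun x => g x == 0).
Proof.
move=> mg; under eq_fun do rewrite -normc_eq0.
by apply: measurable_fun_eqr; [exact: measurable_fun_normc | exact: measurable_cst].
Qed.

Lemma cmeasurable_if (b : R -> bool) g h : measurable D -> measurable_fun D b ->
  cmeasurable D g -> cmeasurable D h -> cmeasurable D (fun x => if b x then g x else h x).
Proof.
move=> mD mb [g1 g2] [h1 h2]; split.
- rewrite (_ : _ \o _ = fun x => if b x then cre (g x) else cre (h x)).
    by apply: measurable_fun_if => //; apply: (measurable_funS mD) => // ? [].
  by apply/funext => x /=; case: (b x).
- rewrite (_ : _ \o _ = fun x => if b x then cim (g x) else cim (h x)).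
    by apply: measurable_fun_if => //; apply: (measurable_funS mD) => // ? [].
  by apply/funext => x /=; case: (b x).
Qed.

Lemma cmeasurable_phase g : measurable D -> cmeasurable D g ->
  cmeasurable D (fun x => phase (g x)).
Proof.
move=> mD mg; apply: cmeasurable_if => //; first exact: measurable_fun_eq0.
  exact: cmeasurable_cst.
apply: cmeasurableM => //.
exact: cmeasurable_real (measurable_funV (measurable_fun_normc mg)).
Qed.

Lemma cmeasurable_ahat (alpha tau : R) : cmeasurable D (ahat alpha tau).
Proof.
have ml : measurable_fun D (fun f : R => - (2 * pi * tau * f)).
  by apply/measurable_funN/measurable_funM; [exact: measurable_cst | exact: measurable_id].
split; apply: measurable_funM; try exact: measurable_cst.
- exact: measurableT_comp (continuous_measurable_fun (@continuous_cos R)) ml.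
- exact: measurableT_comp (continuous_measurable_fun (@continuous_sin R)) ml.
Qed.

End Measurability.

Section SpectralEfficiency.
Variable R : realType.

Definition spectral_efficiency (S G P N0 : R) : R := log2 (1 + S * P / ((G + 1) * N0)).

Lemma ln2_gt0 : 0 < ln (2 : R).
Proof. by rewrite ln_gt0 // ltr1n. Qed.

Lemma spectral_efficiency_ge0 (S G P N0 : R) : 0 <= S -> 0 <= G -> 0 <= P -> 0 < N0 ->
  0 <= spectral_efficiency S G P N0.
Proof.
move=> S0 G0 P0 N00; rewrite /spectral_efficiency /log2.
apply: divr_ge0; last exact: ltW ln2_gt0.
by rewrite ln_ge0 // lerDl divr_ge0 ?mulr_ge0 ?addr_ge0 // ltW.
Qed.

Lemma ler_spectral_efficiency (S S' G P N0 : R) : 0 <= S -> S <= S' -> 0 <= G -> 0 <= P ->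
  0 < N0 -> spectral_efficiency S G P N0 <= spectral_efficiency S' G P N0.
Proof.
move=> S0 SS' G0 P0 N00; have D0 : 0 < (G + 1) * N0 by rewrite mulr_gt0 // ltr_wpDl.
have x0 : 0 <= S * P / ((G + 1) * N0) by apply: divr_ge0; [exact: mulr_ge0 | exact: ltW].
have xx' : S * P / ((G + 1) * N0) <= S' * P / ((G + 1) * N0).
  by rewrite ler_pM2r ?invr_gt0 // ler_wpM2r.
rewrite /spectral_efficiency /log2 ler_wpM2r ?invr_ge0 ?(ltW ln2_gt0) //.
by rewrite ler_ln ?posrE ?lerD2l // ltr_wpDr // (le_trans x0).
Qed.

Lemma cvg_spectral_efficiency (S G : nat -> R) (S0 G0 P N0 : R) :
  0 <= S0 -> 0 <= G0 -> 0 <= P -> 0 < N0 ->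
  S n @[n --> \oo] --> S0 -> G n @[n --> \oo] --> G0 ->
  spectral_efficiency (S n) (G n) P N0 @[n --> \oo] --> spectral_efficiency S0 G0 P N0.
Proof.
move=> S00 G00 P0 N00 cS cG; have D0 : 0 < (G0 + 1) * N0 by rewrite mulr_gt0 // ltr_wpDl.
have pos : 0 < 1 + S0 * P / ((G0 + 1) * N0).
  by rewrite ltr_wpDr //; apply: divr_ge0; [exact: mulr_ge0 | exact: ltW].
apply: cvgMr_tmp; apply: (continuous_cvg _ (continuous_ln pos)).
apply: cvgD; first exact: cvg_cst.
apply: cvgM; first by apply: cvgM => //; exact: cvg_cst.
apply: cvgV; first by rewrite gt_eqF.
by apply: cvgM; [apply: cvgD => //; exact: cvg_cst | exact: cvg_cst].
Qed.

Lemma measurable_fun_spectral_efficiency (D : set R) (S G P : R -> R) (N0 : R) :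
  measurable_fun D S -> measurable_fun D G -> measurable_fun D P ->
  measurable_fun D (fun x => spectral_efficiency (S x) (G x) (P x) N0).
Proof.
move=> mS mG mP; apply: measurable_fun_log2; apply: measurable_funD; first exact: measurable_cst.
apply: measurable_funM; first exact: measurable_funM.
apply: measurable_funV; apply: measurable_funM; last exact: measurable_cst.
by apply: measurable_funD => //; exact: measurable_cst.
Qed.

End SpectralEfficiency.

Section FatouBound.
Local Open Scope ereal_scope.

Lemma ge0_le_integral_cvg d (T : measurableType d) (R : realType)
    (mu : {measure set T -> \bar R}) (D : set T) (g : nat -> T -> R) (h : T -> R) (M : \bar R) :
  measurable D -> (forall n, measurable_fun D (g n)) -> (forall n x, D x -> (0 <= g n x)%R) ->
  (forall x, D x -> g n x @[n --> \oo] --> h x) ->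
  (forall n, \int[mu]_(x in D) (g n x)%:E <= M) -> \int[mu]_(x in D) (h x)%:E <= M.
Proof.
move=> mD mg g0 gh gM.
have mF n : measurable_fun D (fun x => (g n x)%:E) by exact/measurable_EFinP.
have F0 n x : D x -> 0 <= (g n x)%:E by move=> Dx; rewrite lee_fin g0.
have -> : \int[mu]_(x in D) (h x)%:E = \int[mu]_(x in D) limn_einf (fun n => (g n x)%:E).
  apply: eq_integral => x; rewrite inE => Dx.
  have gx : (g n x)%:E @[n --> \oo] --> (h x)%:E by apply: cvg_EFin; [exact: nearW | exact: gh].
  by rewrite (cvg_limn_einf_sup gx).1.
apply: le_trans (fatou mu mD mF F0) _.
rewrite limn_einf_lim; apply: lime_le; first exact: is_cvg_einfs.
by apply: nearW => n; apply: le_trans (gM n); apply: ereal_inf_lbound; exists n => /=.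
Qed.

End FatouBound.

Section Relay.
Variables (R : realType) (fc W N0 Pbar Qbar alpha tau : R) (Hsd Hsr Hrd : R -> R[i]).
Hypotheses (W_gt0 : 0 < W) (N0_gt0 : 0 < N0).
Hypotheses (mHsd : cmeasurable (Omega fc W) Hsd) (mHsr : cmeasurable (Omega fc W) Hsr)
  (mHrd : cmeasurable (Omega fc W) Hrd).

Local Notation D := (Omega fc W).

Lemma measurable_Omega : measurable D.
Proof. exact: measurable_itv. Qed.

Lemma rate_factor_ge0 : 0 <= 1 / (2 * W).
Proof. by rewrite divr_ge0 ?mulr_ge0 // ltW. Qed.

Lemma ge0_le_integ (g h : R -> R) : measurable_fun D g -> measurable_fun D h ->
  (forall x, D x -> 0 <= g x) -> (forall x, D x -> g x <= h x) -> (integ D g <= integ D h)%E.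
Proof.
move=> mg mh g0 gh; apply: ge0_le_integral.
- exact: measurable_Omega.
- by move=> x Dx; rewrite lee_fin g0.
- exact/measurable_EFinP.
- exact/measurable_EFinP.
- by move=> x Dx; rewrite lee_fin gh.
Qed.

Lemma ge0_integZl (k : R) (g : R -> R) : 0 <= k -> measurable_fun D g ->
  (forall x, D x -> 0 <= g x) -> (k%:E * integ D g = integ D (fun x => k * g x)%R)%E.
Proof.
move=> k0 mg g0; rewrite /integ; under [RHS]eq_integral do rewrite EFinM.
by rewrite ge0_integralZl_EFin //; [exact: measurable_Omega | exact/measurable_EFinP].
Qed.

Definition relay_of (Xi : R -> R[i]) f : R[i] := Xi f / (1 + ahat alpha tau f * Xi f).

Lemma effTheta_relay_of Xi f : 1 + ahat alpha tau f * Xi f != 0 ->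
  loop_ok alpha tau (relay_of Xi) f /\ effTheta alpha tau (relay_of Xi) f = Xi f.
Proof.
move=> nz; rewrite /loop_ok /effTheta /relay_of loop_inverse // invr_eq0.
by rewrite invrK divfK.
Qed.

Lemma cmeasurable_effTheta Th : cmeasurable D Th -> cmeasurable D (effTheta alpha tau Th).
Proof.
move=> mTh; apply: cmeasurableM => //; apply: cmeasurableV; apply: cmeasurableD.
  exact: cmeasurable_cst.
by apply: cmeasurableN; apply: cmeasurableM => //; exact: cmeasurable_ahat.
Qed.

Lemma cmeasurable_relay_of Xi : cmeasurable D Xi -> cmeasurable D (relay_of Xi).
Proof.
move=> mXi; apply: cmeasurableM => //; apply: cmeasurableV; apply: cmeasurableD.
  exact: cmeasurable_cst.
by apply: cmeasurableM => //; exact: cmeasurable_ahat.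
Qed.

Definition orig_integrand (P : R -> R) (Th : R -> R[i]) f : R :=
  spectral_efficiency (sqmod (Hsd f + Hrd f * Hsr f * effTheta alpha tau Th f))
    (sqmod (Hrd f * effTheta alpha tau Th f)) (P f) N0.

Definition new_integrand (P Xb : R -> R) f : R :=
  spectral_efficiency ((normc (Hsd f) + normc (Hrd f * Hsr f) * Xb f) ^+ 2)
    (sqmod (Hrd f) * Xb f ^+ 2) (P f) N0.

Lemma rate_origE P Th : rate_orig fc W N0 Hsd Hsr Hrd alpha tau P Th =
  ((1 / (2 * W))%:E * integ D (orig_integrand P Th))%E.
Proof. by []. Qed.

Lemma rate_newE P Xb : rate_new fc W N0 Hsd Hsr Hrd P Xb =
  ((1 / (2 * W))%:E * integ D (new_integrand P Xb))%E.
Proof. by congr (_ * integ _ _)%E; apply/funext => f; rewrite !sqrt_sqmod. Qed.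

Lemma measurable_orig_integrand P Th : measurable_fun D P -> cmeasurable D Th ->
  measurable_fun D (orig_integrand P Th).
Proof.
move=> mP mTh; have mE := cmeasurable_effTheta mTh.
apply: measurable_fun_spectral_efficiency => //; apply: measurable_fun_sqmod.
  by apply: cmeasurableD => //; do 2 apply: cmeasurableM => //.
exact: cmeasurableM.
Qed.

Lemma measurable_new_integrand P Xb : measurable_fun D P -> measurable_fun D Xb ->
  measurable_fun D (new_integrand P Xb).
Proof.
move=> mP mXb; apply: measurable_fun_spectral_efficiency => //.
  apply: measurable_funX; apply: measurable_funD; first exact: measurable_fun_normc.
  by apply: measurable_funM => //; apply: measurable_fun_normc; exact: cmeasurableM.
by apply: measurable_funM; [exact: measurable_fun_sqmod | exact: measurable_funX].
Qed.

Lemma orig_integrand_ge0 (P : R -> R) Th f : 0 <= P f -> 0 <= orig_integrand P Th f.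
Proof. by move=> P0; apply: spectral_efficiency_ge0; rewrite ?sqmod_ge0. Qed.

Lemma new_integrand_ge0 (P Xb : R -> R) f : 0 <= P f -> 0 <= new_integrand P Xb f.
Proof.
move=> P0; apply: spectral_efficiency_ge0 => //; first exact: sqr_ge0.
exact: mulr_ge0 (sqmod_ge0 _) (sqr_ge0 _).
Qed.

Lemma cvg_new_integrand (P : R -> R) (Y : nat -> R -> R) (Y0 : R -> R) f : 0 <= P f ->
  Y n f @[n --> \oo] --> Y0 f ->
  new_integrand P (Y n) f @[n --> \oo] --> new_integrand P Y0 f.
Proof.
move=> P0 cY; apply: cvg_spectral_efficiency => //.
- exact: sqr_ge0.
- exact: mulr_ge0 (sqmod_ge0 _) (sqr_ge0 _).
- rewrite expr2; under eq_fun do rewrite expr2.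
  by apply: cvgM; apply: cvgD; [exact: cvg_cst | exact: cvgMl_tmp | exact: cvg_cst | exact: cvgMl_tmp].
- apply: cvgMl_tmp; rewrite expr2; under eq_fun do rewrite expr2.
  exact: cvgM.
Qed.

Lemma orig_integrand_le_new (P : R -> R) Th f : 0 <= P f ->
  orig_integrand P Th f <= new_integrand P (fun f => normc (effTheta alpha tau Th f)) f.
Proof.
move=> P0; rewrite /orig_integrand /new_integrand; set e := effTheta alpha tau Th f.
rewrite [sqmod (Hrd f * e)]sqmod_normc normcM exprMn -sqmod_normc.
apply: ler_spectral_efficiency => //; [exact: sqmod_ge0 | | exact: mulr_ge0 (sqmod_ge0 _) (sqr_ge0 _)].
rewrite sqmod_normc -normcM; apply: lerXn2r; last exact: le_normcD.
- by rewrite nnegrE normc_ge0.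
- by rewrite nnegrE addr_ge0 ?normc_ge0.
Qed.

Lemma C_orig_le_C_new :
  (C_orig fc W N0 Pbar Qbar Hsd Hsr Hrd alpha tau <= C_new fc W N0 Pbar Qbar Hsd Hsr Hrd)%E.
Proof.
apply: ge_ereal_sup => _ [[P Th] /= [mP mTh PTh hP hQ] <-].
pose Xb : R -> R := fun f => normc (effTheta alpha tau Th f).
have mXb : measurable_fun D Xb := measurable_fun_normc (cmeasurable_effTheta mTh).
apply: le_trans (ereal_sup_ubound _); last first.
  exists (P, Xb) => //; split => //=.
  - by move=> f Df; split; [exact: (PTh f Df).1 | exact: normc_ge0].
  - suff -> : (fun f => Xb f ^+ 2 * (sqmod (Hsr f) * P f + N0)) =
              (fun f => sqmod (effTheta alpha tau Th f) * (sqmod (Hsr f) * P f + N0)) by [].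
    by apply/funext => f; rewrite [sqmod (effTheta _ _ _ _)]sqmod_normc.
rewrite rate_origE rate_newE; apply: lee_wpmul2l; first by rewrite lee_fin rate_factor_ge0.
apply: ge0_le_integ; [exact: measurable_orig_integrand | exact: measurable_new_integrand | |].
- by move=> f Df; apply: orig_integrand_ge0; exact: (PTh f Df).1.
- by move=> f Df; apply: orig_integrand_le_new; exact: (PTh f Df).1.
Qed.

Definition aligned (Y : R -> R) f : R[i] := phase (Hsd f) / phase (Hrd f * Hsr f) * (Y f)%:C.

Lemma cmeasurable_aligned Y : measurable_fun D Y -> cmeasurable D (aligned Y).
Proof.
move=> mY; have mD := measurable_Omega; apply: cmeasurableM; last exact: cmeasurable_real.
apply: cmeasurableM; first exact: cmeasurable_phase.
by apply: cmeasurableV; apply: cmeasurable_phase => //; exact: cmeasurableM.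
Qed.

Lemma orig_integrand_aligned (P Y : R -> R) f : 0 <= Y f ->
  1 + ahat alpha tau f * aligned Y f != 0 ->
  orig_integrand P (relay_of (aligned Y)) f = new_integrand P Y f.
Proof.
move=> Y0 nz; rewrite /orig_integrand (effTheta_relay_of nz).2 /aligned.
rewrite [sqmod (_ + _)]sqmod_normc normc_add_aligned // [sqmod (_ * _)]sqmod_normc.
by rewrite [normc (_ * (_ * _%:C))]normcM normc_phase_div exprMn -sqmod_normc ger0_norm.
Qed.

Lemma sqmod_effTheta_aligned Y f : 1 + ahat alpha tau f * aligned Y f != 0 ->
  sqmod (effTheta alpha tau (relay_of (aligned Y)) f) = Y f ^+ 2.
Proof.
move=> nz; rewrite (effTheta_relay_of nz).2 sqmod_normc normc_phase_div.
by rewrite real_normK ?num_real.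
Qed.

Section Shrinking.
Variables (P Xb : R -> R).
Hypotheses (mP : measurable_fun D P) (mXb : measurable_fun D Xb)
  (PXb_ge0 : forall f, D f -> 0 <= P f /\ 0 <= Xb f)
  (P_budget : (integ D P <= Pbar%:E)%E)
  (Q_budget : (integ D (fun f => Xb f ^+ 2 * (sqmod (Hsr f) * P f + N0))%R <= Qbar%:E)%E).

(* Where the loop [1 + ahat Xi] of the aligned response vanishes, that of the shrunk one is [1/(n+1)]. *)
Let shrink n f : R :=
  if 1 + ahat alpha tau f * aligned Xb f == 0 then 1 - n.+1%:R^-1 else 1.

Let shrunk n f := Xb f * shrink n f.

Lemma shrink_ge0 n f : 0 <= shrink n f.
Proof.
rewrite /shrink; case: ifP => // _; rewrite subr_ge0 invf_le1 ?ltr0n //.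
by rewrite ler1n.
Qed.

Lemma shrink_le1 n f : shrink n f <= 1.
Proof. by rewrite /shrink; case: ifP => // _; rewrite gerBl invr_ge0. Qed.

Lemma cvg_shrink f : shrink n f @[n --> \oo] --> (1 : R).
Proof.
rewrite /shrink; case: eqP => _; last exact: cvg_cst.
have := cvgB (cvg_cst (1 : R)) (@cvg_harmonic R).
by rewrite subr0; apply.
Qed.

Lemma measurable_shrink n : measurable_fun D (shrink n).
Proof.
apply: measurable_fun_if; [exact: measurable_Omega | | exact: measurable_cst | exact: measurable_cst].
apply: measurable_fun_eq0; apply: cmeasurableD; first exact: cmeasurable_cst.
by apply: cmeasurableM; [exact: cmeasurable_ahat | exact: cmeasurable_aligned].
Qed.

Lemma measurable_shrunk n : measurable_fun D (shrunk n).
Proof. by apply: measurable_funM => //; exact: measurable_shrink. Qed.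

Lemma aligned_shrink_nonsingular n f : 1 + ahat alpha tau f * aligned (shrunk n) f != 0.
Proof.
have -> : aligned (shrunk n) f = aligned Xb f * (shrink n f)%:C by rewrite /aligned rmorphM mulrA.
rewrite /shrink; case: ifPn => [/eqP singular|]; last by rewrite rmorph1 mulr1.
have loop : ahat alpha tau f * aligned Xb f = -1 by apply/eqP; rewrite -addr_eq0 addrC singular.
rewrite mulrA loop mulN1r rmorphB rmorph1 opprB addrCA subrr addr0.
by rewrite -normc_eq0 normc_real normr_eq0 invr_eq0 pnatr_eq0.
Qed.

Let theta n := relay_of (aligned (shrunk n)).

Lemma feasible_theta n : feasible_orig fc W N0 Pbar Qbar Hsr alpha tau P (theta n).
Proof.
have mshrunk := measurable_shrunk n.
split => //.
- exact/cmeasurable_relay_of/cmeasurable_aligned.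
- move=> f Df; split; first exact: (PXb_ge0 Df).1.
  exact: (effTheta_relay_of (aligned_shrink_nonsingular n f)).1.
rewrite (_ : (fun f => _) = fun f => shrunk n f ^+ 2 * (sqmod (Hsr f) * P f + N0)); last first.
  by apply/funext => f; rewrite sqmod_effTheta_aligned // aligned_shrink_nonsingular.
apply: le_trans Q_budget.
have mw : measurable_fun D (fun f => sqmod (Hsr f) * P f + N0).
  apply: measurable_funD; last exact: measurable_cst.
  by apply: measurable_funM => //; exact: measurable_fun_sqmod.
have w0 f : D f -> 0 <= sqmod (Hsr f) * P f + N0.
  by move=> /PXb_ge0[P0 _]; rewrite addr_ge0 ?mulr_ge0 ?sqmod_ge0 // ltW.
apply: ge0_le_integ.
- by apply: measurable_funM => //; exact: measurable_funX.
- by apply: measurable_funM => //; exact: measurable_funX.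
- by move=> f Df; rewrite mulr_ge0 ?sqr_ge0 ?w0.
move=> f Df; rewrite ler_wpM2r ?w0 // /shrunk exprMn ler_piMr ?sqr_ge0 //.
by rewrite expr_le1 ?shrink_ge0 ?shrink_le1.
Qed.

Lemma rate_orig_theta n : rate_orig fc W N0 Hsd Hsr Hrd alpha tau P (theta n) =
  integ D (fun f => 1 / (2 * W) * new_integrand P (shrunk n) f).
Proof.
have mshrunk := measurable_shrunk n.
rewrite rate_origE ge0_integZl; last 3 first.
- exact: rate_factor_ge0.
- by apply: measurable_orig_integrand => //; exact/cmeasurable_relay_of/cmeasurable_aligned.
- by move=> f /PXb_ge0[P0 _]; exact: orig_integrand_ge0.
apply: eq_integral => f; rewrite inE => /PXb_ge0[_ Xb0].
rewrite orig_integrand_aligned // ?aligned_shrink_nonsingular //.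
by rewrite mulr_ge0 ?shrink_ge0.
Qed.

Lemma rate_new_le_C_orig :
  (rate_new fc W N0 Hsd Hsr Hrd P Xb <= C_orig fc W N0 Pbar Qbar Hsd Hsr Hrd alpha tau)%E.
Proof.
have c0 := rate_factor_ge0.
rewrite rate_newE ge0_integZl //; last 2 first.
- exact: measurable_new_integrand.
- by move=> f /PXb_ge0[P0 _]; exact: new_integrand_ge0.
apply: (ge0_le_integral_cvg (mu := lebesgue_measure)
  (g := fun n f => 1 / (2 * W) * new_integrand P (shrunk n) f)).
- exact: measurable_Omega.
- move=> n; apply: measurable_funM; first exact: measurable_cst.
  by apply: measurable_new_integrand => //; exact: measurable_shrunk.
- by move=> n f /PXb_ge0[P0 _]; rewrite mulr_ge0 // new_integrand_ge0.
- move=> f /PXb_ge0[P0 _]; apply: cvgMl_tmp; apply: cvg_new_integrand => //.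
  by rewrite -[X in _ --> X]mulr1; apply: cvgMl_tmp; exact: cvg_shrink.
move=> n; apply: (@le_trans _ _ (rate_orig fc W N0 Hsd Hsr Hrd alpha tau P (theta n))).
  by rewrite rate_orig_theta; exact: lexx.
by apply: ereal_sup_ubound; exists (P, theta n) => //; exact: feasible_theta.
Qed.

End Shrinking.

Lemma C_new_le_C_orig :
  (C_new fc W N0 Pbar Qbar Hsd Hsr Hrd <= C_orig fc W N0 Pbar Qbar Hsd Hsr Hrd alpha tau)%E.
Proof.
apply: ge_ereal_sup => _ [[P Xb] /= [mP mXb PXb_ge0 P_budget Q_budget] <-].
exact: rate_new_le_C_orig.
Qed.

End Relay.

Theorem mainTheorem3 (R : realType) (fc W N0 Pbar Qbar alpha tau : R)
    (Hsd Hsr Hrd : R -> R[i]) :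
  0 < W -> 0 < N0 -> alpha < 1 -> 0 < tau ->
  cmeasurable (Omega fc W) Hsd ->
  cmeasurable (Omega fc W) Hsr ->
  cmeasurable (Omega fc W) Hrd ->
  C_orig fc W N0 Pbar Qbar Hsd Hsr Hrd alpha tau = C_new fc W N0 Pbar Qbar Hsd Hsr Hrd.
Proof.
move=> W_gt0 N0_gt0 _ _ mHsd mHsr mHrd.
apply/le_anti/andP; split; first exact: C_orig_le_C_new.
exact: C_new_le_C_orig.
Qed.
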